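(* Let $\Delta$ be a finite tree, $\mathbb{G}=\mathbb{G}(\Delta)$, $K\le\mathbb{G}$ a finite index subgroup, $v$ a vertex of $\Psi(K)$ and $w$ a vertex of $\widetilde{\Delta}^e$ with $\gamma_K(w)=v$. Then (1) there is a bijection between the vertices of $\Psi(K)$ adjacent to $v$ and the classes of vertices of $\widetilde{\Delta}^e$ adjacent to $w$ modulo conjugation by elements of $K$; (2) there is a bijection between the edges of $\Psi(K)$ incident to $v$ and the classes of vertices of $\widetilde{\Delta}^e$ adjacent to $w$ modulo conjugation by elements of $C_K(w)=K\cap C_{\mathbb{G}}(w)$.
   Context: $\mathbb{G}(\Delta)$ is the right-angled Artin group with generators the vertices of $\Delta$ (canonical generators) and relations $[u,v]=1$ for each edge of $\Delta$. Conjugation: $g^h=hgh^{-1}$. The reduced extension graph $\widetilde{\Delta}^e$ has as vertices the elements of $\mathbb{G}$ conjugate to canonical generators corresponding to vertices of $\Delta$ of degree greater than 1, two vertices being adjacent iff they commute; $\mathbb{G}$ (hence $K$) acts on it by conjugation. $\Psi(K)=K\backslash\widetilde{\Delta}^e$ is the quotient graph (it may have multiple edges), and $\gamma_K:\widetilde{\Delta}^e\to\Psi(K)$ the quotient map. *)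

From HB Require Import structures.
From mathcomp Require Import all_boot.
From mathcomp Require Import monoid fingraph.

Set Implicit Arguments.
Unset Strict Implicit.
Unset Printing Implicit Defensive.

Local Open Scope group_scope.

Definition is_finite_tree (T : finType) (e : rel T) : Prop :=
  [/\ symmetric e, irreflexive e,
      (forall x y : T, connect e x y) &
      (forall s : seq T, uniq s -> 3 <= size s -> ~~ cycle e s)].

Definition degree (T : finType) (e : rel T) (t : T) : nat :=
  #|[pred u | e t u]|.

(* (G, iota) is the right-angled Artin group G(Delta) with canonical
   generators iota t: the relations [iota u, iota v] = 1 hold for every edge
   u v of Delta, and (G, iota) is universal for this property, i.e. G is the
   group given by the presentation < T | [u,v] = 1 for uv an edge >. *)
Definition is_RAAG (T : finType) (e : rel T) (G : groupType) (iota : T -> G)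
  : Prop :=
  (forall u v, e u v -> iota u * iota v = iota v * iota u) /\
  (forall (H : groupType) (f : T -> H),
     (forall u v, e u v -> f u * f v = f v * f u) ->
     exists phi : G -> H,
       [/\ {morph phi : x y / x * y},
           (forall t, phi (iota t) = f t) &
           (forall psi : G -> H, {morph psi : x y / x * y} ->
              (forall t, psi (iota t) = f t) -> forall x, psi x = phi x)]).

(* conjugation with the paper's convention g^h = h g h^{-1} *)
Definition conjP (G : groupType) (h g : G) : G := h * g * h^-1.

Definition is_subgroup (G : groupType) (K : G -> Prop) : Prop :=
  [/\ K 1, (forall x y, K x -> K y -> K (x * y)) & (forall x, K x -> K x^-1)].

Definition finite_index (G : groupType) (K : G -> Prop) : Prop :=
  exists s : seq G, forall g : G, exists2 r, r \in s & K (r^-1 * g).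

Definition centK (G : groupType) (K : G -> Prop) (w : G) : G -> Prop :=
  fun k => K k /\ k * w = w * k.

Definition redExtVertex (T : finType) (e : rel T) (G : groupType)
  (iota : T -> G) (x : G) : Prop :=
  exists (g : G) (t : T), 1 < degree e t /\ x = conjP g (iota t).

Definition redExtAdj (T : finType) (e : rel T) (G : groupType)
  (iota : T -> G) (x y : G) : Prop :=
  [/\ redExtVertex e iota x, redExtVertex e iota y, x <> y & x * y = y * x].

Definition conjRel (G : groupType) (K : G -> Prop) (x y : G) : Prop :=
  exists k, K k /\ y = conjP k x.

Definition gammaK (G : groupType) (K : G -> Prop) (x : G) : G -> Prop :=
  fun y => conjRel K x y.

Definition PsiVertex (T : finType) (e : rel T) (G : groupType)
  (iota : T -> G) (K : G -> Prop) (O : G -> Prop) : Prop :=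
  exists x, redExtVertex e iota x /\ O = gammaK K x.

Definition upair (G : Type) (x y : G) : G -> Prop := fun z => z = x \/ z = y.

(* K-orbit of the edge {x, y}: an edge of Psi(K) (multiple edges allowed) *)
Definition edgeOrbit (G : groupType) (K : G -> Prop) (x y : G)
  : (G -> Prop) -> Prop :=
  fun P => exists k, K k /\ P = upair (conjP k x) (conjP k y).

Definition PsiEdge (T : finType) (e : rel T) (G : groupType)
  (iota : T -> G) (K : G -> Prop) (E : (G -> Prop) -> Prop) : Prop :=
  exists x y, redExtAdj e iota x y /\ E = edgeOrbit K x y.

Definition PsiIncident (T : finType) (e : rel T) (G : groupType)
  (iota : T -> G) (K : G -> Prop) (O : G -> Prop)
  (E : (G -> Prop) -> Prop) : Prop :=
  PsiEdge e iota K E /\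
  exists P, E P /\ exists z, P z /\ gammaK K z = O.

Definition PsiAdj (T : finType) (e : rel T) (G : groupType)
  (iota : T -> G) (K : G -> Prop) (O O' : G -> Prop) : Prop :=
  exists x y, [/\ redExtAdj e iota x y, gammaK K x = O & gammaK K y = O'].

Definition classesOn (X : Type) (A : X -> Prop) (R : X -> X -> Prop)
  : (X -> Prop) -> Prop :=
  fun C => exists a, A a /\ C = (fun b => A b /\ R a b).

Definition bijection_between (X Y : Type) (A : X -> Prop) (B : Y -> Prop)
  : Prop :=
  exists f : X -> Y,
    [/\ (forall a, A a -> B (f a)),
        (forall a a', A a -> A a' -> f a = f a' -> a = a') &
        (forall b, B b -> exists2 a, A a & f a = b)].

(* The only group-theoretic input is: if a conjugate x = m t m^-1 of a
   canonical generator t commutes with t, then x = t.  Let q be the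
   retraction of G killing t, and F the free group on the set G, on which G
   acts by conjugation through q.  The universal property maps G into
   F >< G, sending t to (t, t) and every other generator u to (1, u); the
   first coordinate d g is a cocycle with weval (d g) * q g = g.  As q x = 1,
   the reduced word d x commutes with the letter t, so it is a power of t;
   its exponent sum is that of d t, namely 1, hence d x = t and x = t.
   Consequently no element of K swaps the two ends of an edge at w, so the
   K-orbits of edges at w match the C_K(w)-classes of neighbours of w, just
   as the K-orbits of neighbours of w match the vertices adjacent to
   gamma_K(w). *)

From HB Require Import structures.
From mathcomp Require Import all_boot.
From mathcomp Require Import monoid fingraph.
From mathcomp Require Import ssralg ssrint zify.
From Stdlib Require Import FunctionalExtensionality PropExtensionality.

Set Implicit Arguments.
Unset Strict Implicit.
Unset Printing Implicit Defensive.

Import GRing.Theory.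

(** * Reduced words *)

Lemma cons_eq_rcons_all (X : eqType) (a b : X) s :
  a :: s = rcons s b -> all (pred1 a) (a :: s).
Proof.
elim: s a => [|x s IHs] a /=; first by case=> ->; rewrite eqxx.
by case=> -> /IHs; rewrite /= eqxx.
Qed.

Section ReducedWords.
Variable X : eqType.

(* The letter (x, true) stands for x and (x, false) for x^-1. *)
Definition letter := (X * bool)%type.

Definition linv (a : letter) : letter := (a.1, ~~ a.2).

Lemma linvK : involutive linv.
Proof. by case=> x b; rewrite /linv negbK. Qed.

Definition reduced (w : seq letter) := sorted (fun a b => b != linv a) w.

Definition push (a : letter) (w : seq letter) :=
  if w is b :: w' then if b == linv a then w' else a :: w else [:: a].

Definition wmul (u v : seq letter) := foldr push v u.

Definition winv (u : seq letter) := rev (map linv u).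

Lemma reduced_behead a w : reduced (a :: w) -> reduced w.
Proof. exact: path_sorted. Qed.

Lemma push_reduced a w : reduced w -> reduced (push a w).
Proof.
case: w => [|b w] //= Hw; case: ifP => Hb; first exact: reduced_behead Hw.
by rewrite /reduced /= Hb.
Qed.

Lemma push_cons a w : reduced (a :: w) -> push a w = a :: w.
Proof. by case: w => [|b w] //= /andP [/negbTE ->]. Qed.

Lemma pushK a w : reduced w -> push (linv a) (push a w) = w.
Proof.
case: w => [|b w] /=; first by rewrite linvK eqxx.
case: ifP => [/eqP -> | _] Hw; last by rewrite /= linvK eqxx.
by rewrite push_cons // -(linvK b); exact: reduced_behead Hw.
Qed.

Lemma pushKV a w : reduced w -> push a (push (linv a) w) = w.
Proof. by rewrite -{1}(linvK a); exact: pushK. Qed.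

Lemma wmul_reduced u v : reduced v -> reduced (wmul u v).
Proof. by elim: u => [|a u IHu] //= Hv; apply/push_reduced/IHu. Qed.

Lemma wmul_push a u v : reduced v -> wmul (push a u) v = push a (wmul u v).
Proof.
case: u => [|b u] //= Hv; case: ifP => // /eqP ->.
by rewrite pushKV // wmul_reduced.
Qed.

Lemma wmulA u v w : reduced v -> reduced w ->
  wmul (wmul u v) w = wmul u (wmul v w).
Proof. by move=> Hv Hw; elim: u => [|a u IHu] //=; rewrite wmul_push // IHu. Qed.

Lemma wmul_cat u v : reduced (u ++ v) -> wmul u v = u ++ v.
Proof.
elim: u => [|a u IHu] //= Huv.
by rewrite IHu ?push_cons //; exact: reduced_behead Huv.
Qed.

Lemma wmulw0 u : reduced u -> wmul u [::] = u.
Proof. by move=> Hu; rewrite wmul_cat cats0. Qed.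

Lemma winvK : involutive winv.
Proof. by move=> u; rewrite /winv map_rev revK (mapK linvK). Qed.

Lemma winv_reduced u : reduced u -> reduced (winv u).
Proof.
rewrite /reduced /winv rev_sorted sorted_map; apply: sub_sorted => a b /=.
by apply: contra => /eqP ->; rewrite linvK.
Qed.

Lemma wmulVw u : reduced u -> wmul (winv u) u = [::].
Proof.
elim: u => [|a u IHu] //= Hu.
rewrite /winv /= rev_cons /wmul foldr_rcons /= linvK eqxx.
exact/IHu/(reduced_behead Hu).
Qed.

Lemma wmulwV u : reduced u -> wmul u (winv u) = [::].
Proof. by move=> Hu; rewrite -{1}(winvK u) wmulVw // winv_reduced. Qed.

Lemma wmul_rcons_letter s b a : reduced (rcons s b) ->
  wmul (rcons s b) [:: a] = if a == linv b then s else rcons (rcons s b) a.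
Proof.
move=> Hsb; rewrite /wmul foldr_rcons /=; case: ifP => Hab.
  by apply: wmulw0; move: Hsb; rewrite /reduced -cats1 => /cat_sorted2 [].
have Esba : rcons (rcons s b) a = s ++ [:: b; a] by rewrite -!cats1 -catA.
rewrite -/(wmul s [:: b; a]) Esba wmul_cat // -{}Esba.
move: Hsb; rewrite /reduced; case: s => [|c s] /=; first by rewrite Hab.
by rewrite !rcons_path last_rcons Hab => ->.
Qed.

Lemma commute_letter w a : reduced w -> wmul w [:: a] = push a w ->
  all (pred1 a) w || all (pred1 (linv a)) w.
Proof.
case/lastP: w => [|s b] // Hsb; rewrite wmul_rcons_letter //.
case Ew: (rcons s b) => [|c w].
  by move/(congr1 size): Ew; rewrite size_rcons.
rewrite [push _ _]/=; case: ifP => [/eqP Hab|_]; case: ifP => [/eqP Hca|_] E.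
- by rewrite E in Ew; rewrite -Hca (cons_eq_rcons_all (esym Ew)) orbT.
- by have := congr1 size E; rewrite -Ew /= size_rcons; lia.
- by have := congr1 size E; rewrite /= !size_rcons; lia.
- by move: (cons_eq_rcons_all (esym E)) => /= /andP [_ ->].
Qed.

Section Relabel.
Variable f : X -> X.

Definition relabel (a : letter) : letter := (f a.1, a.2).

Hypothesis f_inj : injective f.

Lemma relabel_eq a b : (relabel a == relabel b) = (a == b).
Proof. by case: a b => x b [y c]; rewrite !xpair_eqE (inj_eq f_inj). Qed.

Lemma map_push a w : map relabel (push a w) = push (relabel a) (map relabel w).
Proof.
case: w => [|b w] //=.
by rewrite -[linv (relabel a)]/(relabel (linv a)) relabel_eq; case: ifP.
Qed.

Lemma map_wmul u v :
  map relabel (wmul u v) = wmul (map relabel u) (map relabel v).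
Proof. by elim: u => [|a u IHu] //=; rewrite map_push IHu. Qed.

Lemma map_reduced w : reduced w -> reduced (map relabel w).
Proof.
rewrite /reduced sorted_map; apply: sub_sorted => a b /=.
by rewrite -[linv (relabel a)]/(relabel (linv a)) relabel_eq.
Qed.

End Relabel.

Lemma map_relabel_id (f : X -> X) w : f =1 id -> map (relabel f) w = w.
Proof.
by move=> fE; rewrite -[RHS]map_id; apply: eq_map => -[x b]; rewrite /relabel fE.
Qed.

End ReducedWords.

Local Open Scope group_scope.

Lemma conjPE (G : groupType) (h x : G) : conjP h x = x ^ h^-1.
Proof. by rewrite /conjP conjgE invgK mulgA. Qed.

Section ConjP.
Variable G : groupType.
Implicit Types h k x y : G.

Lemma conjPM h k x : conjP h (conjP k x) = conjP (h * k) x.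
Proof. by rewrite !conjPE -conjgM invgM. Qed.

Lemma conjP1 x : conjP 1 x = x.
Proof. by rewrite conjPE invg1 conjg1. Qed.

Lemma conjPK h x : conjP h^-1 (conjP h x) = x.
Proof. by rewrite !conjPE invgK conjgKV. Qed.

Lemma conjP_inj h : injective (conjP h).
Proof. by move=> x y; rewrite !conjPE => /conjg_inj. Qed.

Lemma conjPMl h x y : conjP h (x * y) = conjP h x * conjP h y.
Proof. by rewrite !conjPE conjMg. Qed.

Lemma conjPV h x : conjP h x^-1 = (conjP h x)^-1.
Proof. by rewrite !conjPE conjVg. Qed.

Lemma conjP_fixP h x : conjP h x = x <-> h * x = x * h.
Proof. by rewrite /conjP; split=> [xE|->]; rewrite ?mulgK // -{2}xE mulgVK. Qed.

End ConjP.

Arguments conjP_fixP {G h x}.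

Section WordEvaluation.
Variable G : groupType.

Definition eval_letter (a : letter G) : G := if a.2 then a.1 else a.1^-1.

Definition weval (w : seq (letter G)) : G :=
  foldr (fun a g => eval_letter a * g) 1 w.

Lemma weval_push a w : weval (push a w) = eval_letter a * weval w.
Proof.
case: w => [|b w] //=; case: ifP => // /eqP ->.
by case: a => x [] /=; rewrite mulgA ?mulgV ?mulVg mul1g.
Qed.

Lemma weval_wmul u v : weval (wmul u v) = weval u * weval v.
Proof. by elim: u => [|a u IHu] /=; rewrite ?mul1g // weval_push IHu mulgA. Qed.

Lemma weval_conj c w : weval (map (relabel (conjP c)) w) = conjP c (weval w).
Proof.
elim: w => [|[x b] w IHw] /=; first by rewrite conjPE conj1g.
by rewrite IHw conjPMl /eval_letter; case: b => //=; rewrite conjPV.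
Qed.

End WordEvaluation.

Section ExponentSum.
Variable X : eqType.
Local Open Scope ring_scope.

Definition sign (a : letter X) : int := if a.2 then 1 else -1.

Definition wdeg (w : seq (letter X)) : int := \sum_(a <- w) sign a.

Lemma wdeg_push a w : wdeg (push a w) = sign a + wdeg w.
Proof.
case: w => [|b w]; first by rewrite /wdeg big_seq1 big_nil addr0.
rewrite /= /wdeg; case: ifP => [/eqP ->|_]; rewrite !big_cons //.
by case: a => x [] /=; rewrite addrA ?subrr ?addNr add0r.
Qed.

Lemma wdeg_wmul u v : wdeg (wmul u v) = wdeg u + wdeg v.
Proof.
elim: u => [|a u IHu] /=; first by rewrite /wdeg big_nil add0r.
by rewrite wdeg_push IHu /wdeg big_cons addrA.
Qed.

Lemma wdeg_relabel f w : wdeg (map (relabel f) w) = wdeg w.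
Proof. by rewrite /wdeg big_map. Qed.

Lemma wdeg_const a w : all (pred1 a) w -> wdeg w = (size w)%:Z * sign a.
Proof.
elim: w => [|b w IHw] /=; first by rewrite /wdeg big_nil mul0r.
case/andP=> /eqP -> /IHw; rewrite /wdeg big_cons => ->.
by rewrite intS mulrDl mul1r.
Qed.

End ExponentSum.

(** * The semidirect product of a free group by a group acting on its basis *)

Record gaction (G : groupType) (X : Type) := GAction {
  gact :> G -> X -> X;
  gact1 : forall x, gact 1 x = x;
  gactM : forall g h x, gact (g * h) x = gact g (gact h x) }.

Definition rword (X : eqType) := {w : seq (letter X) | reduced w}.

Definition free_sdprod (G : groupType) (X : choiceType) (A : gaction G X) :=
  (rword X * G)%type.

HB.instance Definition _ (G : groupType) (X : choiceType) (A : gaction G X) :=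
  Choice.on (free_sdprod A).

Section FreeSemidirectProduct.
Variables (G : groupType) (X : choiceType) (A : gaction G X).

Lemma gact_inj g : injective (A g).
Proof. by apply: (can_inj (g := A g^-1)) => x; rewrite -gactM mulVg gact1. Qed.

Definition twist g (w : seq (letter X)) := map (relabel (A g)) w.

Lemma twist_reduced g w : reduced w -> reduced (twist g w).
Proof. exact/map_reduced/gact_inj. Qed.

Lemma twist_wmul g u v : twist g (wmul u v) = wmul (twist g u) (twist g v).
Proof. exact/map_wmul/gact_inj. Qed.

Lemma twistM g h w : twist g (twist h w) = twist (g * h) w.
Proof.
by rewrite /twist -map_comp; apply: eq_map => a; rewrite /= /relabel gactM.
Qed.

Lemma twist1 w : twist 1 w = w.
Proof. exact/map_relabel_id/gact1. Qed.

Definition sd_mul (p1 p2 : free_sdprod A) : free_sdprod A :=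
  (exist _ (wmul (val p1.1) (twist p1.2 (val p2.1)))
     (wmul_reduced _ (twist_reduced _ (valP p2.1))), p1.2 * p2.2).

Lemma sd_eq (p1 p2 : free_sdprod A) :
  val p1.1 = val p2.1 -> p1.2 = p2.2 -> p1 = p2.
Proof. by case: p1 p2 => [u1 g1] [u2 g2] /= /val_inj -> ->. Qed.

Definition sd_one : free_sdprod A := (exist _ [::] isT, 1).

Definition sd_inv (p : free_sdprod A) : free_sdprod A :=
  (exist _ (twist p.2^-1 (winv (val p.1)))
     (twist_reduced _ (winv_reduced (valP p.1))), p.2^-1).

Lemma sd_mulA : associative sd_mul.
Proof.
move=> [[u1 H1] g1] [[u2 H2] g2] [[u3 H3] g3]; congr (_, _); last exact: mulgA.
by apply: val_inj; rewrite /= twist_wmul twistM wmulA // twist_reduced.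
Qed.

Lemma sd_mul1g : left_id sd_one sd_mul.
Proof.
move=> [[u H] g]; congr (_, _); last exact: mul1g.
by apply: val_inj; rewrite /= twist1.
Qed.

Lemma sd_mulg1 : right_id sd_one sd_mul.
Proof.
move=> [[u H] g]; congr (_, _); last exact: mulg1.
by apply: val_inj; rewrite /= wmulw0.
Qed.

Lemma sd_mulVg : left_inverse sd_one sd_inv sd_mul.
Proof.
move=> [[u H] g]; congr (_, _); last exact: mulVg.
by apply: val_inj; rewrite /= -twist_wmul wmulVw.
Qed.

Lemma sd_mulgV : right_inverse sd_one sd_inv sd_mul.
Proof.
move=> [[u H] g]; congr (_, _); last exact: mulgV.
by apply: val_inj; rewrite /= twistM mulgV twist1 wmulwV.
Qed.

End FreeSemidirectProduct.

HB.instance Definition _ (G : groupType) (X : choiceType) (A : gaction G X) :=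
  isGroup.Build (free_sdprod A) (@sd_mulA G X A) (@sd_mul1g G X A)
    (@sd_mulg1 G X A) (@sd_mulVg G X A) (@sd_mulgV G X A).

(** * Conjugates of a generator of a right-angled Artin group *)

Lemma morph1g (G H : groupType) (f : G -> H) :
  {morph f : x y / x * y} -> f 1 = 1.
Proof. by move=> fM; apply: (mulgI (f 1)); rewrite -fM !mulg1. Qed.

Lemma morphVg (G H : groupType) (f : G -> H) :
  {morph f : x y / x * y} -> {morph f : x / x^-1}.
Proof. by move=> fM x; apply: (mulgI (f x)); rewrite -fM !mulgV (morph1g fM). Qed.

Section RAAG.
Variables (T : finType) (e : rel T) (G : groupType) (iota : T -> G).
Hypothesis hG : is_RAAG e iota.

Lemma raag_morph_eq (H : groupType) (p1 p2 : G -> H) :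
  {morph p1 : x y / x * y} -> {morph p2 : x y / x * y} ->
  (forall t, p1 (iota t) = p2 (iota t)) -> p1 =1 p2.
Proof.
move=> p1M p2M p12 x.
have p1e u v : e u v -> p1 (iota u) * p1 (iota v) = p1 (iota v) * p1 (iota u).
  by move=> euv; rewrite -!p1M hG.1.
have [phi [_ _ phi_uniq]] := hG.2 H _ p1e.
by rewrite (phi_uniq p1) // (phi_uniq p2).
Qed.

Section KillGenerator.
Variable t0 : T.
Let t := iota t0.

Lemma raag_retraction : exists2 q : G -> G, {morph q : x y / x * y} &
  q t = 1 /\ forall u, u != t0 -> q (iota u) = iota u.
Proof.
pose f u := if u == t0 then 1 else iota u.
have fe u v : e u v -> f u * f v = f v * f u.
  by rewrite /f; case: eqP; case: eqP; rewrite ?mul1g ?mulg1 //; move=> _ _ /hG.1.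
have [q [qM qf _]] := hG.2 G f fe.
exists q => //; split=> [|u /negbTE u_t0]; rewrite qf /f ?eqxx ?u_t0 //.
Qed.

Section Cocycle.
Variable q : G -> G.
Hypotheses (qM : {morph q : x y / x * y}) (q_t : q t = 1)
  (q_iota : forall u, u != t0 -> q (iota u) = iota u).

Fact qconj1 x : conjP (q 1) x = x.
Proof. by rewrite (morph1g qM) conjP1. Qed.

Fact qconjM g h x : conjP (q (g * h)) x = conjP (q g) (conjP (q h) x).
Proof. by rewrite qM conjPM. Qed.

Definition qconj : gaction G G :=
  @GAction G G (fun g => conjP (q g)) qconj1 qconjM.

Lemma raag_cocycle : exists d : G -> seq (letter G),
  [/\ forall g, reduced (d g),
      forall g h, d (g * h) = wmul (d g) (map (relabel (conjP (q g))) (d h)),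
      d t = [:: (t, true)] &
      forall g, weval (d g) * q g = g].
Proof.
pose F u : free_sdprod qconj :=
  if u == t0 then (exist _ [:: (t, true)] isT, t) else (exist _ [::] isT, iota u).
have Fe u v : e u v -> F u * F v = F v * F u.
  move=> euv; have tu := hG.1 _ _ euv.
  rewrite /F; case: eqVneq => [Eu|u_t0]; case: eqVneq => [Ev|v_t0] //;
    rewrite ?Eu ?Ev in tu *; apply: sd_eq => //=.
  - by rewrite /twist /relabel /= q_iota // (conjP_fixP.2 (esym tu)).
  - by rewrite /twist /relabel /= q_iota // (conjP_fixP.2 tu).
have [phi [phiM phiF _]] := hG.2 _ F Fe.
have phi2 : forall g, (phi g).2 = g.
  apply: (raag_morph_eq (p1 := fun g => (phi g).2) (p2 := id)) => // [g h|u].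
    by rewrite /= phiM.
  by rewrite /= phiF /F; case: eqP => // ->.
exists (fun g => val (phi g).1); split=> [g|g h||].
- exact: valP.
- by rewrite phiM /= phi2.
- by rewrite phiF /F eqxx.
apply: (raag_morph_eq (p1 := fun g => weval (val (phi g).1) * q g) (p2 := id)).
- move=> g h /=; rewrite phiM /= phi2 weval_wmul weval_conj qM.
  by rewrite /conjP !mulgA mulgVK.
- by [].
move=> u; rewrite phiF /F; case: eqVneq => [->|u_t0] /=.
  by rewrite q_t !mulg1.
by rewrite q_iota // mul1g.
Qed.

End Cocycle.

Lemma conj_generator_commute m :
  conjP m t * t = t * conjP m t -> conjP m t = t.
Proof.
set x := conjP m t => xt.
have [q qM [q_t q_iota]] := raag_retraction.
have [d [d_red dM d_t dK]] := raag_cocycle qM q_t q_iota.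
have deg_dM g h : wdeg (d (g * h)) = (wdeg (d g) + wdeg (d h))%R.
  by rewrite dM wdeg_wmul wdeg_relabel.
have q_x : q x = 1 by rewrite /x /conjP !qM q_t mulg1 (morphVg qM) mulgV.
have deg_x : wdeg (d x) = 1%R.
  have deg_t : wdeg [:: (t, true)] = 1%R by rewrite /wdeg big_seq1.
  have := deg_dM 1 1; have := deg_dM m m^-1.
  by rewrite mulg1 mulgV /x /conjP !deg_dM d_t deg_t; lia.
have dx_commute : wmul (d x) [:: (t, true)] = push (t, true) (d x).
  have := congr1 d xt; rewrite (dM x t) (dM t x) q_x q_t d_t.
  by rewrite !map_relabel_id //; exact: conjP1.
case/orP: (commute_letter (d_red x) dx_commute) => /[dup] /wdeg_const.
  rewrite deg_x /sign mulr1 => /eqP.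
  case Edx : (d x) => [|a [|b w]] //= _ /andP [/eqP Ea _].
  by rewrite -(dK x) Edx Ea q_x /= !mulg1.
by rewrite deg_x /sign /= mulrN1; lia.
Qed.

End KillGenerator.

Lemma redExtVertex_conj_commute x h : redExtVertex e iota x ->
  conjP h x * x = x * conjP h x -> conjP h x = x.
Proof.
case=> g [t [_ ->]] comm; apply: (@conjP_inj _ g^-1); rewrite conjPK !conjPM.
apply: conj_generator_commute; apply: (@conjP_inj _ g).
rewrite [LHS]conjPMl [RHS]conjPMl conjPM.
have -> : g * (g^-1 * h * g) = h * g by rewrite !mulgA mulgV mul1g.
by rewrite -conjPM.
Qed.

End RAAG.

(** * Neighbourhoods in the quotient graph *)

Lemma bijection_classesOn (X Y : Type) (A : Y -> Prop) (S : X -> Prop)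
    (R : X -> X -> Prop) (h : X -> Y) :
  (forall x y, S x -> S y -> h x = h y <-> R x y) ->
  (forall x, S x -> A (h x)) ->
  (forall a, A a -> exists2 x, S x & a = h x) ->
  bijection_between A (classesOn S R).
Proof.
move=> hR hA hS.
have classE x : S x -> (fun b => S b /\ h b = h x) = (fun b => S b /\ R x b).
  move=> Sx; apply: functional_extensionality => b.
  apply: propositional_extensionality; split=> -[Sb E]; split=> //.
    exact/(hR _ _ Sx Sb)/esym.
  exact/esym/(hR _ _ Sx Sb).
exists (fun a b => S b /\ h b = a); split.
- by move=> a /hS [x Sx ->]; exists x; rewrite classE.
- move=> a a' /hS [x Sx ->] _ E.
  have : S x /\ h x = h x by [].
  by rewrite (congr1 (fun P => P x) E) => -[].
- by move=> C [x [Sx ->]]; exists (h x); rewrite ?classE //; exact: hA.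
Qed.

Section ExtensionGraph.
Variables (T : finType) (e : rel T) (G : groupType) (iota : T -> G).

Lemma redExtVertex_conj h x :
  redExtVertex e iota x -> redExtVertex e iota (conjP h x).
Proof. by case=> g [t [dt ->]]; exists (h * g), t; rewrite conjPM. Qed.

Lemma redExtAdj_conj h x y :
  redExtAdj e iota x y -> redExtAdj e iota (conjP h x) (conjP h y).
Proof.
case=> Vx Vy xy cxy; split; try exact: redExtVertex_conj.
  by move/conjP_inj.
by rewrite -!conjPMl cxy.
Qed.

Lemma redExtAdj_sym x y : redExtAdj e iota x y -> redExtAdj e iota y x.
Proof. by case=> Vx Vy xy cxy; split=> // yx; apply: xy. Qed.

Section Subgroup.
Variable K : G -> Prop.
Hypothesis hK : is_subgroup K.

Lemma conjRel_refl x : conjRel K x x.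
Proof. by case: hK => K1 _ _; exists 1; rewrite conjP1. Qed.

Lemma conjRel_sym x y : conjRel K x y -> conjRel K y x.
Proof.
case: hK => _ _ KV [k [Kk ->]].
by exists k^-1; rewrite conjPK; split=> //; exact: KV.
Qed.

Lemma conjRel_trans x y z : conjRel K x y -> conjRel K y z -> conjRel K x z.
Proof.
case: hK => _ KM _ [k [Kk ->]] [k' [Kk' ->]].
by exists (k' * k); rewrite conjPM; split=> //; exact: KM.
Qed.

Lemma gammaK_eqE x y : gammaK K x = gammaK K y <-> conjRel K x y.
Proof.
split=> xy.
  by rewrite -[conjRel K x y]/(gammaK K x y) xy; exact: conjRel_refl.
apply: functional_extensionality => z; apply: propositional_extensionality.
split; [exact: conjRel_trans (conjRel_sym xy) | exact: conjRel_trans xy].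
Qed.

Lemma edgeOrbit_sym x y : edgeOrbit K x y = edgeOrbit K y x.
Proof.
have upairC a b : upair a b = upair b a.
  apply: functional_extensionality => z; apply: propositional_extensionality.
  by rewrite /upair or_comm.
apply: functional_extensionality => P; apply: propositional_extensionality.
by split=> -[k [Kk ->]]; exists k; rewrite upairC.
Qed.

Lemma edgeOrbit_conj h x y : K h ->
  edgeOrbit K (conjP h x) (conjP h y) = edgeOrbit K x y.
Proof.
case: hK => _ KM KV Kh.
apply: functional_extensionality => P; apply: propositional_extensionality.
split=> -[k [Kk ->]].
  by exists (k * h); rewrite !conjPM; split=> //; exact: KM.
by exists (k * h^-1); rewrite !conjPM mulgVK; split=> //; exact/KM/KV.
Qed.

End Subgroup.

Section Star.
Variables (K : G -> Prop) (w : G).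
Hypothesis hK : is_subgroup K.
Local Notation adj_w := (redExtAdj e iota w).

Lemma PsiAdj_repr O :
  PsiAdj e iota K (gammaK K w) O -> exists2 y, adj_w y & O = gammaK K y.
Proof.
case=> x [y [xy /(gammaK_eqE hK) [k [Kk ->]] <-]].
exists (conjP k y); first exact: redExtAdj_conj.
by apply/(gammaK_eqE hK); exists k.
Qed.

Lemma PsiIncident_repr E :
  PsiIncident e iota K (gammaK K w) E -> exists2 y, adj_w y & E = edgeOrbit K w y.
Proof.
case: (hK) => _ KM _ [[x [y [xy ->]]] [_ [[k [Kk ->]] [z [xyz]]]]].
move=> /(gammaK_eqE hK) [k' [Kk' zE]].
have moved a b : redExtAdj e iota a b -> w = conjP (k' * k) a ->
    exists2 y', adj_w y' & edgeOrbit K a b = edgeOrbit K w y'.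
  move=> ab ->; exists (conjP (k' * k) b); first exact: redExtAdj_conj.
  by rewrite edgeOrbit_conj //; exact: KM.
case: xyz => zE0; rewrite zE0 conjPM in zE.
  exact: moved.
by rewrite edgeOrbit_sym; apply: moved => //; exact: redExtAdj_sym.
Qed.

Lemma edgeOrbit_eqE y y' : is_RAAG e iota -> redExtVertex e iota w ->
  adj_w y -> adj_w y' ->
  edgeOrbit K w y = edgeOrbit K w y' <-> conjRel (centK K w) y y'.
Proof.
move=> hG hw wy wy'; split=> [yy'|[c [[Kc /conjP_fixP cw] ->]]]; last first.
  by rewrite -{2}cw edgeOrbit_conj.
have : edgeOrbit K w y' (upair w y') by exists 1; rewrite !conjP1; case: hK.
rewrite -yy' => -[k [Kk up]].
have [wE|wE] : w = conjP k w \/ w = conjP k y.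
  by rewrite -/(upair _ _ w) -up; left.
  have [y'E|->] : y' = conjP k w \/ y' = conjP k y.
    by rewrite -/(upair _ _ y') -up; right.
    by case: wy' => _ _ []; rewrite y'E -wE.
  by exists k; split=> //; split=> //; apply/conjP_fixP.
(* Otherwise k swaps the ends of the edge {w, y}. *)
have yE : y = conjP k^-1 w by rewrite wE conjPK.
case: wy => _ _ wy_ne wy; case: wy_ne.
by rewrite yE (redExtVertex_conj_commute hG hw) // -yE wy.
Qed.

Lemma edgeOrbit_PsiIncident y :
  adj_w y -> PsiIncident e iota K (gammaK K w) (edgeOrbit K w y).
Proof.
move=> wy; split; first by exists w, y.
exists (upair w y); split; first by exists 1; rewrite !conjP1; case: hK.
by exists w; split; [left|].
Qed.

End Star.

End ExtensionGraph.

Theorem mainTheorem10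
  (T : finType) (e : rel T) (hDelta : is_finite_tree e)
  (G : groupType) (iota : T -> G) (hG : is_RAAG e iota)
  (K : G -> Prop) (hK : is_subgroup K) (hKfin : finite_index K)
  (v : G -> Prop) (hv : PsiVertex e iota K v)
  (w : G) (hw : redExtVertex e iota w) (hwv : gammaK K w = v) :
  bijection_between (PsiAdj e iota K v)
    (classesOn (redExtAdj e iota w) (conjRel K)) /\
  bijection_between (PsiIncident e iota K v)
    (classesOn (redExtAdj e iota w) (conjRel (centK K w))).
Proof.
subst v; split.
- apply: (bijection_classesOn (h := gammaK K)) => [y y' _ _||].
  + exact: gammaK_eqE.
  + by move=> y wy; exists w, y.
  + exact: PsiAdj_repr.
- apply: (bijection_classesOn (h := edgeOrbit K w)) => [y y'||].
  + exact: edgeOrbit_eqE.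
  + exact: edgeOrbit_PsiIncident.
  + exact: PsiIncident_repr.
Qed.
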